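(* Let $d$ be an integer and let $b,\alpha,\beta\in\mathbb{Z}_{\ge0}^n$ satisfy $\alpha_1\le\cdots\le\alpha_n=d$, $\beta_1\le\cdots\le\beta_n=d$, $\alpha_i\le\beta_i$ for all $i$, $\alpha_1=0$ and $\beta_1=b_1$. Let $I\subseteq S=K[x_1,\ldots,x_n]$ be the ideal generated by all monomials $x^u$ with $u\in\mathbb{Z}_{\ge0}^n$, $0\le u_i\le b_i$ and $\alpha_i\le u_1+\cdots+u_i\le\beta_i$ for $i=1,\ldots,n$. Then $\mathrm{depth}(S/I)=0$ if and only if all of the following hold: (i) $b_i\ge1$ for all $i=1,\ldots,n$; (ii) $\alpha_i\le\beta_i-1$ for $i=2,\ldots,n-1$; (iii) $\beta_i+b_{i+1}+\cdots+b_j\ge\alpha_j+j-i+1$ for all $1\le i\le j\le n-1$; (iv) $\beta_i+b_{i+1}+\cdots+b_n\ge d+n-i$ for all $1\le i\le n$.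
   Context: $K$ is a field. $I$ is a polymatroidal ideal (a basic PLP-polymatroidal ideal of type $(\mathbf{0},b\mid\alpha,\beta)$), generated in degree $d$. *)

From HB Require Import structures.
From mathcomp Require Import all_boot all_order all_algebra.
From mathcomp Require Import multinomials.mpoly.
Set Implicit Arguments. Unset Strict Implicit. Unset Printing Implicit Defensive.
Import GRing.Theory.
Local Open Scope ring_scope.

Section Defs.
Variables (K : fieldType) (n : nat).

Definition in_ideal (G : {mpoly K[n]} -> Prop) (f : {mpoly K[n]}) : Prop :=
  exists s : seq ({mpoly K[n]} * {mpoly K[n]}),
    (forall p, p \in s -> G p.2) /\ f = \sum_(p <- s) p.1 * p.2.

Definition in_max_ideal (f : {mpoly K[n]}) : Prop := f@_0%MM = 0.

Definition regular_on_quot (I : {mpoly K[n]} -> Prop) (f : {mpoly K[n]}) : Prop :=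
  forall g, I (f * g) -> I g.

(* depth(S/I) = 0 : S/I <> 0 and there is no S/I-regular element in m,
   i.e. the maximal length of an S/I-regular sequence in m is 0 *)
Definition depth_quot_zero (I : {mpoly K[n]} -> Prop) : Prop :=
  ~ I 1 /\ forall f, in_max_ideal f -> ~ regular_on_quot I f.

End Defs.

(* generators of the PLP-polymatroidal ideal, 0-based indices:
   u_i <= b_i and alpha_i <= u_0 + ... + u_i <= beta_i for all i < n *)
Definition plp_gen (K : fieldType) (n : nat) (b alpha beta : nat -> nat)
    (f : {mpoly K[n]}) : Prop :=
  exists u : 'X_{1..n},
    f = 'X_[u] /\
    forall i : 'I_n,
      (u i <= b i)%N /\
      (alpha i <= \sum_(j : 'I_n | (j <= i)%N) u j <= beta i)%N.

(* For a monomial ideal I, depth (S/I) = 0 exactly when S/I has a socle monomial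
   x^w: x^w is not in I but x_k x^w is, for every k.  Such an x^w is killed by the
   whole maximal ideal.  Without one, x_1 + ... + x_n is regular: if a monomial
   x^w of g lies outside I, climb from w, staying outside I, to an exponent c
   saturated in some direction k; among the monomials of g that lie below c
   outside direction k, one with the largest k-th exponent survives in
   g (x_1 + ... + x_n) and lies outside I.

   For the PLP ideal, a socle exponent w has w_k < b_k, and splicing the generators
   dividing x_1 x^w and x_n x^w shows alpha_j < beta_i + w_(i+1) + ... + w_j;
   summing these bounds gives the conditions.  Conversely, under the conditions
   the greedy exponent with partial sums P_(m+1) = min (beta_m - 1, P_m + b_m - 1)
   has degree d - 1, and w + e_k is itself a generator for every k. *)

From HB Require Import structures.
From mathcomp Require Import all_boot all_order all_algebra.
From mathcomp Require Import multinomials.mpoly.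
From mathcomp Require Import zify.
From Stdlib Require Import Classical.
Set Implicit Arguments. Unset Strict Implicit. Unset Printing Implicit Defensive.
Import GRing.Theory.

Lemma leq_sum_nat a c (F G : nat -> nat) :
  (forall k, a <= k < c -> F k <= G k) ->
  \sum_(a <= k < c) F k <= \sum_(a <= k < c) G k.
Proof.
by move=> FG; rewrite big_nat_cond [leqRHS]big_nat_cond; apply: leq_sum => k /andP[/FG].
Qed.

Lemma leq_sum_nat_ltn a c (F G : nat -> nat) :
  (forall k, a <= k < c -> F k < G k) ->
  \sum_(a <= k < c) F k + (c - a) <= \sum_(a <= k < c) G k.
Proof.
move=> FG; rewrite -[c - a]muln1 -sum_nat_const_nat -big_split /=.
by apply: leq_sum_nat => k /FG; rewrite addn1.
Qed.

Lemma sum_nat_predn a c (F : nat -> nat) :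
  (forall k, a <= k < c -> 0 < F k) ->
  \sum_(a <= k < c) (F k).-1 + (c - a) = \sum_(a <= k < c) F k.
Proof.
move=> F_gt0; rewrite -[c - a]muln1 -sum_nat_const_nat -big_split /=.
by apply: eq_big_nat => k /F_gt0; rewrite addn1 => /prednK.
Qed.

Lemma sum_nat_eq_ltn m k : \sum_(0 <= j < m) (j == k) = (k < m).
Proof.
by rewrite -big_mkcond sum1_count count_uniq_mem ?iota_uniq // mem_iota subn0.
Qed.

Lemma seq_arg_maxn (T : choiceType) (s : seq T) (P : pred T) (F : T -> nat) x :
    x \in s -> P x ->
  exists2 y, y \in s & P y /\ forall z, z \in s -> P z -> F z <= F y.
Proof.
move=> xs Px.
have [y Py ymax] := @arg_maxnP _ (SeqSub xs) [pred z | P (val z)] (F \o val) Px.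
by exists (val y); [exact: valP | split=> // z zs Pz; exact: ymax (SeqSub zs) Pz].
Qed.

Section MonomialIdeal.
Variables (K : fieldType) (n : nat) (gen : 'X_{1..n} -> Prop).

Local Open Scope ring_scope.

Definition mono_gen (f : {mpoly K[n]}) : Prop := exists u, f = 'X_[u] /\ gen u.

Local Notation I := (in_ideal mono_gen).

Definition gen_dvd (m : 'X_{1..n}) : Prop := exists2 u, gen u & (u <= m)%MM.

Definition socle_mnm (w : 'X_{1..n}) : Prop :=
  ~ gen_dvd w /\ forall k, gen_dvd (w + U_(k))%MM.

Lemma gen_dvd_trans m m' : gen_dvd m -> (m <= m')%MM -> gen_dvd m'.
Proof. by case=> u gu um mm'; exists u; last exact: lepm_trans um mm'. Qed.

Lemma mcoeffMXE (p : {mpoly K[n]}) u m :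
  (p * 'X_[u])@_m = if (u <= m)%MM then p@_(m - u) else 0.
Proof.
case: ifP => um; first by rewrite -{1}(submK um) addmC mcoeffMX.
apply/eqP; rewrite mcoeff_eq0 (perm_mem (msuppMX p u)); apply/mapP => -[m' _ mE].
by move: um; rewrite mE lem_addr.
Qed.

Lemma in_idealP f : I f <-> forall m, m \in msupp f -> gen_dvd m.
Proof.
split.
  case=> s [sG ->] m; rewrite mcoeff_msupp; case: (classic (gen_dvd m)) => // ndvd.
  rewrite raddf_sum big1_seq ?eqxx // => -[p q] /andP[_ /sG [u [-> gu]]] /=.
  by rewrite mcoeffMXE; case: ifP => // um; case: ndvd; exists u.
move=> fdvd; rewrite (mpolyE f).
elim: (msupp f) fdvd => [|m r IH] fdvd; first by exists [::]; rewrite !big_nil.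
have [s [sG sE]] : I (\sum_(m' <- r) f@_m' *: 'X_[m']).
  by apply: IH => m' m'r; apply: fdvd; rewrite inE m'r orbT.
have [u gu um] := fdvd m (mem_head _ _).
exists ((f@_m *: 'X_[m - u], 'X_[u]) :: s); split.
  by move=> p; rewrite inE => /predU1P[-> | /sG //]; exists u.
by rewrite !big_cons /= sE -scalerAl -mpolyXD submK.
Qed.

Lemma socle_mnm_depth0 w : socle_mnm w -> depth_quot_zero I.
Proof.
move=> [nw wdvd]; split.
  move/in_idealP => /(_ 0%MM); rewrite mcoeff_msupp mcoeff1 eqxx oner_neq0 => /(_ isT).
  by move/gen_dvd_trans => /(_ w) dvd0; apply/nw/dvd0/mnm_lepP => i; rewrite mnm0E.
move=> f f0 freg; apply: nw.
have /in_idealP : I 'X_[w].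
  apply: freg; apply/in_idealP => m; rewrite mcoeff_msupp mcoeffMXE.
  case: ifP => [wm nz | _]; last by rewrite eqxx.
  have /existsP [k mk] : [exists k, (m - w)%MM k != 0%N].
    rewrite -negb_forall; apply: contra nz => /forallP m0.
    suff -> : (m - w = 0)%MM by rewrite f0 eqxx.
    by apply/mnmP => i; rewrite mnm0E; apply/eqP/m0.
  apply: gen_dvd_trans (wdvd k) _; apply/mnm_lepP => i; rewrite mnmDE mnm1E.
  have := mnm_lepP wm i; move: mk; rewrite mnmBE; case: (eqVneq k i) => [<-|_]; lia.
by move/(_ w); rewrite msuppX mem_seq1 eqxx; exact.
Qed.

Lemma nondvd_saturate D c : (forall w, ~ socle_mnm w) ->
    ~ gen_dvd c -> (forall i, c i <= D)%N ->
  exists c' k, [/\ (c <= c')%MM, forall i, (c' i <= D)%N, ~ gen_dvd c' & c' k = D].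
Proof.
move=> nosocle; have [N] := ubnP (n * D - mdeg c)%N.
elim: N c => // N IH c cN nc cD.
case: (classic (exists k, c k = D)) => [[k ck] | nomax].
  by exists c, k; split=> //; exact: lepm_refl.
have [k nck] : exists k, ~ gen_dvd (c + U_(k))%MM.
  by apply: not_all_ex_not => cU; apply: (nosocle c).
have ckD : (c k < D)%N.
  by rewrite ltn_neqAle cD andbT; apply/eqP => ck; apply: nomax; exists k.
have cUD i : ((c + U_(k))%MM i <= D)%N.
  by rewrite mnmDE mnm1E; case: eqP => [<-|_]; rewrite ?addn1 ?addn0.
have cU_deg : (mdeg (c + U_(k))%MM <= n * D)%N.
  rewrite mdegE (@leq_trans (\sum_(i < n) D)%N) ?leq_sum //.
  by rewrite sum_nat_const card_ord mulnC.
have [|c' [k' [cc' c'D nc' c'k']]] := IH _ _ nck cUD.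
  by move: cN cU_deg; rewrite mdegD mdeg1; lia.
by exists c', k'; split=> //; exact: lepm_trans (lem_addr _ _) cc'.
Qed.

Lemma sum_mpolyX_regular D : (forall u, gen u -> forall i, u i <= D)%N ->
  (forall w, ~ socle_mnm w) -> regular_on_quot I (\sum_(i < n) 'X_i).
Proof.
move=> genD nosocle g /in_idealP gX; apply/in_idealP => w wg; apply: NNPP => nw.
have wD i : (w i <= D + mdeg w)%N.
  by rewrite mdegE (bigD1 i) //= addnCA leq_addr.
have [c [k [wc cD nc ck]]] := nondvd_saturate nosocle nw wD.
pose T := [pred v : 'X_{1..n} | [forall i, (i != k) ==> (v i <= c i)%N]].
have T_nondvd v : T v -> ~ gen_dvd v.
  move=> /forallP Tv [u gu uv]; apply: nc; exists u => //; apply/mnm_lepP => i.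
  case: (eqVneq i k) => [-> | ik].
    by rewrite ck (leq_trans (genD u gu k)) ?leq_addr.
  exact: leq_trans (mnm_lepP uv i) (implyP (Tv i) ik).
have [|v vg [Tv vmax]] := @seq_arg_maxn _ _ T (fun v : 'X_{1..n} => v k) _ wg.
  by apply/forallP => i; apply/implyP => _; exact: (mnm_lepP wc i).
have TvU : T (v + U_(k))%MM.
  apply/forallP => i; apply/implyP => ik; rewrite mnmDE mnm1E eq_sym (negbTE ik) addn0.
  exact: implyP (forallP Tv i) ik.
(* The coefficient of x^(v + e_k) in g (x_1 + ... + x_n) is g_v: any other
   contribution would come from a monomial of T with larger k-th exponent. *)
apply: (T_nondvd _ TvU); apply: gX.
rewrite mcoeff_msupp mulrC mulr_sumr raddf_sum (bigD1 k) //= mcoeffMXE lem_addl addmK.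
rewrite big1 ?addr0 -?mcoeff_msupp // => i ik.
rewrite mcoeffMXE; case: ifP => // _; apply/eqP; rewrite mcoeff_eq0; apply/negP => vi.
have TvUi : T (v + U_(k) - U_(i))%MM.
  apply/forallP => j; apply/implyP => jk; rewrite mnmBE mnmDE mnm1E eq_sym (negbTE jk).
  by rewrite addn0 (leq_trans (leq_subr _ _)) ?(implyP (forallP Tv j) jk).
move: (vmax _ vi TvUi); rewrite mnmBE mnmDE !mnm1E eqxx (negbTE ik) subn0.
by rewrite addn1 ltnn.
Qed.

Theorem depth_quot_zero_socleP D : (forall u, gen u -> forall i, u i <= D)%N ->
  depth_quot_zero I <-> exists w, socle_mnm w.
Proof.
move=> genD; split; last by case=> w /socle_mnm_depth0.
case=> _ noreg; apply: NNPP => nosocle; apply: (noreg (\sum_(i < n) 'X_i)).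
  by rewrite /in_max_ideal raddf_sum big1 // => i _ /=; rewrite mcoeffX mnm1_eq0.
by apply: sum_mpolyX_regular genD _ => w sw; apply: nosocle; exists w.
Qed.

End MonomialIdeal.

Section PLPSocle.
Variables (n d : nat) (b al be : nat -> nat).

Definition plp_exp (u : nat -> nat) : Prop :=
  forall i, i < n -> u i <= b i /\ al i <= \sum_(0 <= j < i.+1) u j <= be i.

Definition plp_dvd (w : nat -> nat) : Prop :=
  exists2 u, plp_exp u & forall j, j < n -> u j <= w j.

Definition plp_socle (w : nat -> nat) : Prop :=
  ~ plp_dvd w /\ forall k, k < n -> plp_dvd (fun j => w j + (j == k)).

Definition plp_conditions : Prop :=
  [/\ (forall i, i < n -> 1 <= b i),
      (forall i, 1 <= i -> i.+2 <= n -> al i < be i),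
      (forall i j, i <= j -> j.+2 <= n ->
         al j + (j - i) + 1 <= be i + \sum_(i.+1 <= k < j.+1) b k) &
      (forall i, i < n -> d + (n - i.+1) <= be i + \sum_(i.+1 <= k < n) b k)].

Lemma plp_exp_splice u v i : i < n -> plp_exp u -> plp_exp v ->
    \sum_(0 <= k < i.+1) u k = \sum_(0 <= k < i.+1) v k ->
  plp_exp (fun k => if k <= i then u k else v k).
Proof.
move=> ilt hu hv euv m mn; split.
  by case: ifP => _; [case: (hu m mn) | case: (hv m mn)].
have sum_u c : c <= i.+1 ->
    \sum_(0 <= k < c) (if k <= i then u k else v k) = \sum_(0 <= k < c) u k.
  by move=> ci; apply: eq_big_nat => k /andP[_ kc]; rewrite ifT //; lia.
case: (leqP m i) => [mi | im]; first by rewrite sum_u //; case: (hu m mn).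
have split_i (F : nat -> nat) :
    \sum_(0 <= k < m.+1) F k = \sum_(0 <= k < i.+1) F k + \sum_(i.+1 <= k < m.+1) F k.
  by rewrite (big_cat_nat (n := i.+1)) // ltnS ltnW.
rewrite split_i sum_u // euv (eq_big_nat _ _ (F2 := v)) => [|k /andP[ik _]].
  by rewrite -split_i; case: (hv m mn).
by rewrite leqNgt ik.
Qed.

Lemma plp_exp_psum_eq u i j : plp_exp u -> i <= j -> j < n ->
  be i + \sum_(i.+1 <= k < j.+1) u k <= al j -> \sum_(0 <= k < i.+1) u k = be i.
Proof.
move=> hu ij jn; have [_ /andP[_ ub]] := hu i (leq_ltn_trans ij jn).
have [_ /andP[lb _]] := hu j jn; move: lb; rewrite (big_cat_nat (n := i.+1)) //=.
lia.
Qed.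

Lemma plp_socle_lift w k : plp_socle w -> k < n ->
  exists2 u, plp_exp u & u k = (w k).+1 /\ forall j, j < n -> j != k -> u j <= w j.
Proof.
move=> [nw hw] kn; have [u hu uw] := hw k kn; exists u => //; split; last first.
  by move=> j jn jk; have := uw j jn; rewrite (negbTE jk) addn0.
have := uw k kn; rewrite eqxx addn1 leq_eqVlt ltnS => /predU1P[//|ukw].
case: nw; exists u => // j jn; have := uw j jn.
by case: (eqVneq j k) => [->|_]; rewrite ?addn0.
Qed.

Lemma plp_socle_lt w k : plp_socle w -> k < n -> w k < b k.
Proof.
by move=> sw kn; have [u hu [<- _]] := plp_socle_lift sw kn; case: (hu k kn).
Qed.

Hypothesis n_gt0 : 0 < n.
Hypothesis al_last : al n.-1 = d.
Hypothesis be_last : be n.-1 = d.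

Let last_lt : n.-1 < n. Proof. by rewrite ltn_predL. Qed.

Lemma plp_exp_sum u : plp_exp u -> \sum_(0 <= j < n) u j = d.
Proof.
move=> hu; have [_] := hu n.-1 last_lt.
by rewrite prednK // al_last be_last => /andP[lb ub]; apply/eqP; rewrite eqn_leq lb ub.
Qed.

Lemma plp_socle_window w i j : plp_socle w -> i <= j -> j.+2 <= n ->
  al j < be i + \sum_(i.+1 <= k < j.+1) w k.
Proof.
move=> sw ij jn; rewrite ltnNge; apply/negP => w_small.
have tight u : plp_exp u -> (forall k, i < k <= j -> u k <= w k) ->
    \sum_(0 <= k < i.+1) u k = be i.
  move=> hu uw; apply: plp_exp_psum_eq hu ij (ltnW jn) (leq_trans _ w_small).
  by rewrite leq_add2l; apply: leq_sum_nat.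
have [u hu [_ uw]] := plp_socle_lift sw last_lt.
have [v hv [_ vw]] := plp_socle_lift sw n_gt0.
case: sw => [nw _]; apply: nw; exists (fun k => if k <= i then u k else v k).
  apply: plp_exp_splice => //; first lia.
  by rewrite !tight // => k /andP[ik kj]; [apply: vw | apply: uw]; lia.
by move=> k kn; case: ifP => ki; [apply: uw | apply: vw]; lia.
Qed.

Theorem plp_socle_conditions w : plp_socle w -> plp_conditions.
Proof.
move=> sw; have w_lt k : k < n -> w k < b k := plp_socle_lt sw.
have sum_w i c : c <= n ->
    \sum_(i <= k < c) w k + (c - i) <= \sum_(i <= k < c) b k.
  by move=> cn; apply: leq_sum_nat_ltn => k /andP[_ kc]; exact: w_lt (leq_trans kc cn).
split.
- by move=> i /w_lt; lia.
- by move=> i _ i2; have := plp_socle_window sw (leqnn i) i2; rewrite big_geq // addn0.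
- move=> i j ij jn; have := plp_socle_window sw ij jn.
  have := sum_w i.+1 j.+1 (ltnW jn); lia.
move=> i lt_in; have [v hv [_ vw]] := plp_socle_lift sw n_gt0.
have := plp_exp_sum hv; rewrite (big_cat_nat (n := i.+1)) //=.
have [_ /andP[_ vi]] := hv i lt_in.
have : \sum_(i.+1 <= k < n) v k <= \sum_(i.+1 <= k < n) w k.
  by apply: leq_sum_nat => k /andP[ik kn]; apply: vw; lia.
have := sum_w i.+1 n (leqnn n); lia.
Qed.

End PLPSocle.

Section SocleWitness.
Variables (n d : nat) (b al be : nat -> nat).

Fixpoint socle_psum m : nat :=
  if m is m'.+1 then minn (be m').-1 (socle_psum m' + (b m').-1) else 0.

Lemma socle_psumS m : socle_psum m.+1 = minn (be m).-1 (socle_psum m + (b m).-1).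
Proof. by []. Qed.

Definition socle_exp j : nat := socle_psum j.+1 - socle_psum j.

Lemma socle_psum_le_be m : socle_psum m.+1 <= (be m).-1.
Proof. exact: geq_minl. Qed.

Lemma socle_exp_le m : socle_exp m <= (b m).-1.
Proof. by rewrite leq_subLR; exact: geq_minr. Qed.

Hypothesis be_homo : forall i, i.+1 < n -> be i <= be i.+1.

Lemma leq_be0 m : m < n -> be 0 <= be m.
Proof. by elim: m => // m IH mn; apply: leq_trans (IH (ltnW mn)) (be_homo mn). Qed.

Lemma socle_psum_homo m : m < n -> socle_psum m <= socle_psum m.+1.
Proof.
case: m => [//|m] mn; rewrite [socle_psum m.+2]socle_psumS leq_min leq_addr andbT.
by apply: leq_trans (socle_psum_le_be m) _; rewrite -!subn1 leq_sub2r // be_homo.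
Qed.

Lemma sum_socle_exp m : m <= n -> \sum_(0 <= j < m) socle_exp j = socle_psum m.
Proof.
move=> mn; rewrite telescope_sumn_in // => [|i /andP[_ im]]; first by rewrite subn0.
by apply: socle_psum_homo; lia.
Qed.

Hypothesis be0 : be 0 = b 0.

Lemma socle_psum_lb m x :
    (forall i, i <= m -> x <= (be i).-1 + \sum_(i.+1 <= k < m.+1) (b k).-1) ->
  x <= socle_psum m.+1.
Proof.
elim: m x => [|m IH] x hx; rewrite socle_psumS leq_min.
  by have := hx 0 (leqnn 0); rewrite big_geq // addn0 -be0 => ->.
have := hx m.+1 (leqnn _); rewrite big_geq // addn0 => -> /=.
rewrite addnC -leq_subLR; apply: IH => i im; have := hx i (leqW im).
by rewrite big_nat_recr //= addnA addnC -leq_subLR.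
Qed.

Lemma al_le_socle_psum m : (forall i, i < n -> 1 <= b i) ->
    (forall i j, i <= j -> j.+2 <= n ->
       al j + (j - i) + 1 <= be i + \sum_(i.+1 <= k < j.+1) b k) ->
  m.+2 <= n -> al m <= socle_psum m.+1.
Proof.
move=> b_gt0 window mn; apply: socle_psum_lb => i im; have := window i m im mn.
by rewrite -sum_nat_predn => [|k /andP[_ km]]; [lia | apply: b_gt0; lia].
Qed.

Hypothesis n_gt0 : 0 < n.
Hypothesis be_last : be n.-1 = d.

Lemma socle_psum_last : (forall i, i < n -> 1 <= b i) ->
    (forall i, i < n -> d + (n - i.+1) <= be i + \sum_(i.+1 <= k < n) b k) ->
  socle_psum n = d.-1.
Proof.
move=> b_gt0 tail; rewrite -(prednK n_gt0); apply/eqP; rewrite eqn_leq.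
rewrite -{1}be_last socle_psum_le_be /=; apply: socle_psum_lb => i i_le.
have i_lt : i < n by rewrite -(prednK n_gt0) ltnS.
rewrite prednK //; have := tail i i_lt.
by rewrite -sum_nat_predn => [|k /andP[_ kn]]; [lia | exact: b_gt0].
Qed.

Hypothesis al_last : al n.-1 = d.

Theorem plp_conditions_socle :
  plp_conditions n d b al be -> plp_socle n b al be socle_exp.
Proof.
case=> b_gt0 _ window tail.
have be_gt0 m : m < n -> 0 < be m.
  by move=> mn; apply: leq_trans (leq_be0 mn); rewrite be0 b_gt0.
have Pn := socle_psum_last b_gt0 tail.
have d_gt0 : 0 < d by rewrite -be_last be_gt0 // ltn_predL.
split.
  case=> u hu uw; have := plp_exp_sum n_gt0 al_last be_last hu.
  have : \sum_(0 <= j < n) u j <= \sum_(0 <= j < n) socle_exp j.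
    by apply: leq_sum_nat => j /andP[_ /uw].
  by rewrite sum_socle_exp // Pn; lia.
move=> k kn; exists (fun j => socle_exp j + (j == k)) => // m mn; split.
  by have := socle_exp_le m; have := b_gt0 m mn; case: (m == k); lia.
rewrite big_split /= sum_socle_exp // sum_nat_eq_ltn.
case: (ltnP m.+1 n) => [m2n | mn'].
  have := al_le_socle_psum b_gt0 window m2n.
  have := socle_psum_le_be m; have := be_gt0 m mn; case: (k < m.+1); lia.
have em : m = n.-1 by lia.
by rewrite em prednK // Pn kn al_last be_last; lia.
Qed.

End SocleWitness.

Section PLPBridge.
Variables (n : nat) (b al be : nat -> nat).

(* [plp_gen K n b al be] is [mono_gen K (plp_mexp b al be)] by definition. *)
Definition plp_mexp (u : 'X_{1..n}) : Prop :=
  forall i : 'I_n,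
    u i <= b i /\ al i <= \sum_(j : 'I_n | j <= i) u j <= be i.

Lemma eq_plp_exp F G : (forall j, j < n -> F j = G j) ->
  plp_exp n b al be F -> plp_exp n b al be G.
Proof.
move=> FG hF i i_lt; rewrite -FG //; split; first by case: (hF i i_lt).
rewrite -(eq_big_nat _ _ (F1 := F)) => [|j /andP[_ ji]]; first by case: (hF i i_lt).
by apply: FG; exact: leq_trans ji i_lt.
Qed.

Lemma plp_mexpE (u : 'X_{1..n}) : plp_mexp u <-> plp_exp n b al be (nth 0 u).
Proof.
have psumE (i : 'I_n) :
    \sum_(j : 'I_n | j <= i) u j = \sum_(0 <= j < i.+1) nth 0 u j.
  rewrite big_mkord (big_ord_widen n (nth 0 u) (ltn_ord i)).
  by apply: eq_bigr => j _; rewrite (mnm_nth 0).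
split=> [hu i i_lt | hu i].
  by have := hu (Ordinal i_lt); rewrite psumE (mnm_nth 0).
by rewrite psumE (mnm_nth 0); apply: hu.
Qed.

Lemma gen_dvd_plpE (w : 'X_{1..n}) :
  gen_dvd plp_mexp w <-> plp_dvd n b al be (nth 0 w).
Proof.
split=> [[u /plp_mexpE hu uw] | [F hF Fw]].
  exists (nth 0 u) => // j j_lt.
  by rewrite -!(mnm_nth 0 _ (Ordinal j_lt)); apply/mnm_lepP.
exists [multinom F i | i < n].
  apply/plp_mexpE; apply: eq_plp_exp hF => j j_lt.
  by rewrite -(mnm_nth 0 _ (Ordinal j_lt)) mnmE.
by apply/mnm_lepP => i; rewrite mnmE (mnm_nth 0); apply: Fw.
Qed.

Lemma plp_socle_mnmE :
  (exists w, socle_mnm plp_mexp w) <-> exists F, plp_socle n b al be F.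
Proof.
have dvd_ext F G : (forall j, j < n -> F j = G j) ->
    plp_dvd n b al be F -> plp_dvd n b al be G.
  by move=> FG [u hu uF]; exists u => // j j_lt; rewrite -FG //; apply: uF.
have nth_mnm (F : nat -> nat) j : j < n -> nth 0 [multinom F i | i < n] j = F j.
  by move=> j_lt; rewrite -[j]/(nat_of_ord (Ordinal j_lt)) -mnm_nth mnmE.
split=> [[w [nw wU]] | [F [nF FU]]].
  exists (nth 0 w); split=> [/gen_dvd_plpE // | k k_lt].
  have /gen_dvd_plpE := wU (Ordinal k_lt); apply: dvd_ext => j j_lt.
  by rewrite -[j]/(nat_of_ord (Ordinal j_lt)) -!mnm_nth mnmDE mnm1E eq_sym.
exists [multinom F i | i < n]; split=> [/gen_dvd_plpE | k].
  by move/(dvd_ext _ _ (nth_mnm F)).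
apply/gen_dvd_plpE; apply: dvd_ext (FU k (ltn_ord k)) => j j_lt.
by rewrite -[j]/(nat_of_ord (Ordinal j_lt)) -!mnm_nth mnmDE mnm1E mnmE eq_sym.
Qed.

End PLPBridge.

Local Open Scope ring_scope.

Theorem corollary3p4 (K : fieldType) (n d : nat) (b alpha beta : nat -> nat) :
  (0 < n)%N ->
  (forall i, (i.+1 < n)%N -> (alpha i <= alpha i.+1)%N) ->
  (forall i, (i.+1 < n)%N -> (beta i <= beta i.+1)%N) ->
  alpha n.-1 = d -> beta n.-1 = d ->
  (forall i, (i < n)%N -> (alpha i <= beta i)%N) ->
  alpha 0%N = 0%N -> beta 0%N = b 0%N ->
  depth_quot_zero (in_ideal (@plp_gen K n b alpha beta))
  <->
  [/\ (forall i, (i < n)%N -> (1 <= b i)%N),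
      (forall i, (1 <= i)%N -> (i.+2 <= n)%N -> (alpha i < beta i)%N),
      (forall i j, (i <= j)%N -> (j.+2 <= n)%N ->
         (alpha j + (j - i) + 1 <= beta i + \sum_(i.+1 <= k < j.+1) b k)%N) &
      (forall i, (i < n)%N ->
         (d + (n - i.+1) <= beta i + \sum_(i.+1 <= k < n) b k)%N)].
Proof.
move=> n_gt0 _ be_homo al_last be_last _ _ be0.
have genD (u : 'X_{1..n}) :
    plp_mexp b alpha beta u -> forall i, (u i <= \max_(j < n) b j)%N.
  by move=> hu i; exact: leq_trans (hu i).1 (leq_bigmax i).
rewrite (depth_quot_zero_socleP K genD) plp_socle_mnmE.
split=> [[w /(plp_socle_conditions n_gt0 al_last be_last)] // | conds].
by exists (socle_exp b beta); exact: plp_conditions_socle conds.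
Qed.
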